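(* For $n\ge2$, let $\sim$ be the equivalence relation on $B_n$ defined by $t\sim t'$ if and only if for every $p\in\{x_1,\dots,x_n\}$, $d_{G(t)}(p)=1\iff d_{G(t')}(p)=1$. Then $|B_n/{\sim}|=2^{n-2}$.
   Context: $B_n$ is the set of bracketings of size $n$: binary terms in which $x_1,\dots,x_n$ each occur exactly once, in this order. For $t\in B_n$, the rooted tree $G(t)$ is defined recursively: $G(x_i)$ is the single vertex $x_i$; $G(t_1t_2)$ is $G(t_1)\cup G(t_2)$ plus an edge from the leftmost variable of $t_1$ to the leftmost variable of $t_2$; it is rooted at $x_1$. $d_T(p)$ denotes the depth (distance from the root) of $p$ in $T$. *)

From mathcomp Require Import all_boot.
Set Implicit Arguments. Unset Strict Implicit. Unset Printing Implicit Defensive.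

(* A bracketing: a binary term whose leaves are the variables x_1,...,x_n,
   each occurring once, in this order.  Since the order of the variables is
   fixed, a bracketing is determined by its shape: a binary tree whose leaves
   are read left to right as x_1, ..., x_n. *)
Inductive bracketing : Type :=
| Var : bracketing
| App : bracketing -> bracketing -> bracketing.

Fixpoint bsize (t : bracketing) : nat :=
  match t with
  | Var => 1
  | App t1 t2 => bsize t1 + bsize t2
  end.

Definition in_B (n : nat) (t : bracketing) : Prop := bsize t = n.

(* Variables are encoded by 0-based indices: x_(i+1) is index i.
   [edges t off] is the edge list of G(t) when the leftmost variable of t
   has index off.  An edge is a pair (a, b) linking the leftmost variable a
   of t1 to the leftmost variable b of t2. *)
Fixpoint edges (t : bracketing) (off : nat) : seq (nat * nat) :=
  match t with
  | Var => [::]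
  | App t1 t2 =>
      (off, off + bsize t1) :: edges t1 off ++ edges t2 (off + bsize t1)
  end.

Definition adjG (t : bracketing) (a b : nat) : bool :=
  ((a, b) \in edges t 0) || ((b, a) \in edges t 0).

Definition rootG : nat := 0.

(* d_{G(t)}(p) = 1 : p is at distance exactly 1 from the root, i.e. p is
   not the root and there is a path of length 1 (an edge) from the root. *)
Definition depth_one (t : bracketing) (p : nat) : bool :=
  (p != rootG) && adjG t rootG p.

Definition equivB (n : nat) (t t' : bracketing) : Prop :=
  forall p : 'I_n, depth_one t p = depth_one t' p.

(* The children of the root x_1 in G(t) are read off the left branch of t:
   the right factor of a subterm t1 t2 on that branch starts with x_(k+1),
   where k is the size of t1.  For t in B_n these children never include x_1,
   always include x_2, and are otherwise arbitrary: growing a bracketing of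
   size k by a variable x_(k+1) on the right, either as t x_(k+1) or inside
   the right factor of t, decides freely whether x_(k+1) is a child of the
   root.  Hence the classes of ~ correspond to the bit vectors of length
   n - 2. *)

From Stdlib Require Import List.
From mathcomp Require Import all_boot zify.

Lemma In_mapP (T : eqType) (U : Type) (f : T -> U) (s : seq T) (y : U) :
  In y (map f s) <-> exists2 x, x \in s & y = f x.
Proof.
elim: s => [|x s IHs] /=; first by split=> // -[].
split=> [[<- | /IHs [z zs ->]] | [z]]; first by exists x; rewrite ?mem_head.
  by exists z; rewrite // inE zs orbT.
rewrite inE => /orP [/eqP -> -> | zs yz]; first by left.
by right; apply/IHs; exists z.
Qed.

Fixpoint spine (t : bracketing) : seq nat :=
  if t is App l _ then bsize l :: spine l else [::].

Lemma bsize_gt0 (t : bracketing) : 0 < bsize t.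
Proof. elim: t => //= l IHl r IHr; lia. Qed.

Lemma edges_bounds (t : bracketing) (off a b : nat) :
  (a, b) \in edges t off -> off <= a /\ off < b.
Proof.
elim: t off => [|l IHl r IHr] off //=; have := bsize_gt0 l.
rewrite inE mem_cat => lpos /orP [/eqP [-> ->] | /orP [/IHl // | /IHr]]; lia.
Qed.

Lemma mem_edges_root (t : bracketing) (p : nat) :
  ((0, p) \in edges t 0) = (p \in spine t).
Proof.
elim: t => [|l IHl r _] //=.
have notin_r : ((0, p) \in edges r (bsize l)) = false.
  by apply/negP => /edges_bounds []; have := bsize_gt0 l; lia.
by rewrite add0n inE mem_cat IHl notin_r orbF inE xpair_eqE eqxx.
Qed.

Lemma spine_bounds (t : bracketing) (p : nat) :
  p \in spine t -> 0 < p < bsize t.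
Proof.
elim: t => [|l IHl r _] //=; have := bsize_gt0 r.
rewrite inE => rpos /orP [/eqP -> | /IHl]; have := bsize_gt0 l; lia.
Qed.

Lemma depth_oneE (t : bracketing) (p : nat) : depth_one t p = (p \in spine t).
Proof.
rewrite /depth_one /adjG /rootG mem_edges_root.
have -> : ((p, 0) \in edges t 0) = false by apply/negP => /edges_bounds [].
by rewrite orbF andb_idl // => /spine_bounds; lia.
Qed.

Lemma mem1_spine (t : bracketing) : 1 < bsize t -> 1 \in spine t.
Proof.
elim: t => [|l IHl r _] //= _; rewrite inE.
case: (ltnP 1 (bsize l)) => [/IHl -> | le_l1]; first by rewrite orbT.
by rewrite eqn_leq le_l1 bsize_gt0.
Qed.

Definition depth_one_profile (t : bracketing) : seq bool :=
  [seq depth_one t p | p <- iota 0 (bsize t)].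

Lemma size_depth_one_profile (t : bracketing) :
  size (depth_one_profile t) = bsize t.
Proof. by rewrite size_map size_iota. Qed.

Lemma nth_depth_one_profile (t : bracketing) (p : nat) :
  p < bsize t -> nth false (depth_one_profile t) p = depth_one t p.
Proof. by move=> lt_p; rewrite (nth_map 0) ?size_iota // nth_iota. Qed.

Lemma equivB_profile (n : nat) (t t' : bracketing) :
  in_B n t -> in_B n t' ->
  equivB n t t' <-> depth_one_profile t = depth_one_profile t'.
Proof.
rewrite /in_B => szt szt'; split=> [eq_tt' | eq_prof p].
  apply: (@eq_from_nth _ false); rewrite !size_depth_one_profile ?szt ?szt' //.
  move=> p lt_pn; rewrite !nth_depth_one_profile ?szt ?szt' //.
  exact: (eq_tt' (Ordinal lt_pn)).
by rewrite -!nth_depth_one_profile ?szt ?szt' ?eq_prof.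
Qed.

Lemma depth_one_profile_head (t : bracketing) : 1 < bsize t ->
  depth_one_profile t = [:: false, true & drop 2 (depth_one_profile t)].
Proof.
move=> lt1t; rewrite /depth_one_profile.
have -> : bsize t = (bsize t - 2).+2 by lia.
rewrite /= drop0 !depth_oneE mem1_spine //.
by have /negbTE -> : 0 \notin spine t by apply/negP => /spine_bounds.
Qed.

Definition add_leaf (t : bracketing) (b : bool) : bracketing :=
  if b then App t Var
  else if t is App l r then App l (App r Var) else App Var Var.

Lemma bsize_add_leaf (t : bracketing) (b : bool) :
  bsize (add_leaf t b) = (bsize t).+1.
Proof. by case: b; case: t => //= *; lia. Qed.

Lemma spine_add_leaf (t : bracketing) (b : bool) : 1 < bsize t ->
  spine (add_leaf t b) = if b then bsize t :: spine t else spine t.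
Proof. by case: b; case: t. Qed.

Lemma depth_one_profile_add_leaf (t : bracketing) (b : bool) : 1 < bsize t ->
  depth_one_profile (add_leaf t b) = rcons (depth_one_profile t) b.
Proof.
move=> lt1t; rewrite /depth_one_profile bsize_add_leaf -addn1 iotaD.
rewrite map_cat cats1.
congr rcons; last first.
  rewrite depth_oneE spine_add_leaf //; case: b; first by rewrite mem_head.
  by apply/negP => /spine_bounds; lia.
apply/eq_in_map => p; rewrite mem_iota => /andP [_ lt_pt].
rewrite !depth_oneE spine_add_leaf //; case: b => //.
by rewrite inE ltn_eqF.
Qed.

Definition bracketing_of_bits (bs : seq bool) : bracketing :=
  foldl add_leaf (App Var Var) bs.

Lemma bracketing_of_bits_rcons (bs : seq bool) (b : bool) :
  bracketing_of_bits (rcons bs b) = add_leaf (bracketing_of_bits bs) b.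
Proof. exact: foldl_rcons. Qed.

Lemma bsize_of_bits (bs : seq bool) :
  bsize (bracketing_of_bits bs) = (size bs).+2.
Proof.
elim/last_ind: bs => [|bs b IH] //.
by rewrite bracketing_of_bits_rcons bsize_add_leaf IH size_rcons.
Qed.

Lemma depth_one_profile_of_bits (bs : seq bool) :
  depth_one_profile (bracketing_of_bits bs) = [:: false, true & bs].
Proof.
elim/last_ind: bs => [|bs b IH].
  by rewrite /depth_one_profile /= !depth_oneE.
rewrite bracketing_of_bits_rcons depth_one_profile_add_leaf ?IH //.
by rewrite bsize_of_bits.
Qed.

Theorem lemma8p5 (n : nat) (hn : 2 <= n) :
  exists reps : seq bracketing,
    [/\ forall t, In t reps -> in_B n t,
        forall i j, i < size reps -> j < size reps ->
          equivB n (nth Var reps i) (nth Var reps j) -> i = j,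
        forall t, in_B n t -> exists2 r, In r reps & equivB n t r
      & size reps = 2 ^ (n - 2)].
Proof.
pose x0 := nseq_tuple (n - 2) false.
pose bits : seq ((n - 2).-tuple bool) := enum {: (n - 2).-tuple bool}.
have uniq_bits : uniq bits := enum_uniq _.
have mem_bits (bs : (n - 2).-tuple bool) : bs \in bits := mem_enum _ bs.
have size_bits : size bits = 2 ^ (n - 2) by rewrite -cardE card_tuple card_bool.
clearbody bits.
have in_B_of_bits (bs : (n - 2).-tuple bool) : in_B n (bracketing_of_bits bs).
  by rewrite /in_B bsize_of_bits size_tuple; lia.
exists [seq bracketing_of_bits bs | bs : (n - 2).-tuple bool <- bits]; split.
- by move=> t /In_mapP [bs _ ->].
- move=> i j; rewrite size_map => lt_i lt_j.
  rewrite !(nth_map x0) //.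
  move/(equivB_profile _ _ _ (in_B_of_bits _) (in_B_of_bits _)).
  rewrite !depth_one_profile_of_bits => -[/val_inj eq_ij].
  by apply/eqP; rewrite -(nth_uniq x0 lt_i lt_j uniq_bits) eq_ij.
- move=> t szt; rewrite /in_B in szt.
  have size_tail : size (drop 2 (depth_one_profile t)) == n - 2.
    by rewrite size_drop size_depth_one_profile szt.
  exists (bracketing_of_bits (Tuple size_tail)).
    by apply/In_mapP; exists (Tuple size_tail).
  apply/equivB_profile => //; rewrite depth_one_profile_of_bits.
  by apply: depth_one_profile_head; lia.
- by rewrite size_map.
Qed.
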